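(* Let $\psi:\mathbb{R}\to\mathbb{R}$ be the Haar wavelet, \[ \psi(t)=\begin{cases}1 & 0\le t<1/2,\\ -1 & 1/2\le t<1,\\ 0 & \text{otherwise},\end{cases} \] and let $f:\mathbb{R}\to\mathbb{R}$ be a continuous and bounded function. Let $T>0$. Suppose that \[ Wf(u,2T):=\int_{-\infty}^{+\infty} f(t)\,\frac{1}{\sqrt{2T}}\,\psi\!\left(\frac{t-u}{2T}\right)\mathrm{d}t=0\quad\text{for all } u\in\mathbb{R}. \] Then $f$ is $T$-periodic, i.e. $f(t+T)=f(t)$ for all $t\in\mathbb{R}$.
   Context: For a wavelet $\psi$ and $u\in\mathbb{R}$, $s>0$, the daughter wavelet is $\psi_{u,s}(t)=\frac{1}{\sqrt{s}}\psi\left(\frac{t-u}{s}\right)$, and the continuous wavelet transform of $f$ at time $u$ and scale $s$ is $Wf(u,s)=\int_{-\infty}^{+\infty} f(t)\,\psi_{u,s}^*(t)\,\mathrm{d}t$ (complex conjugate; here $\psi$ is real). Since the Haar wavelet has compact support and $f$ is bounded and continuous, this integral is well defined even though $f$ need not lie in $L^2(\mathbb{R})$. *)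

From Stdlib Require Import Reals Lra.
From Coquelicot Require Import Coquelicot.
Open Scope R_scope.

Definition haar (t : R) : R :=
  if Rle_dec 0 t then
    (if Rlt_dec t (1/2) then 1
     else if Rlt_dec t 1 then -1 else 0)
  else 0.

Definition daughter (psi : R -> R) (u s : R) (t : R) : R :=
  / sqrt s * psi ((t - u) / s).

(* "Wf(u,s) = w": the (improper, over the whole real line) integral of
   f(t) psi_{u,s}(t) exists and equals w.  (psi is real, so no conjugation.) *)
Definition CWT_is (psi f : R -> R) (u s w : R) : Prop :=
  is_RInt_gen (fun t => f t * daughter psi u s t)
    (Rbar_locally m_infty) (Rbar_locally p_infty) w.

(* Wf(u,2T) is, up to the factor 1/sqrt(2T), the difference between the integrals of f over
   [u, u+T] and [u+T, u+2T].  If it vanishes for every u, the sliding-window integral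
   u |-> int_u^(u+T) f is T-periodic; differentiating, the increment g u = f (u+T) - f u is
   T-periodic, so f (t + n T) = f t + n g t.  Boundedness of f then forces g = 0. *)
From Stdlib Require Import Reals Lra.
From Coquelicot Require Import Coquelicot.
Open Scope R_scope.

Lemma is_RInt_const0 (a b : R) : is_RInt (fun _ => 0) a b 0.
Proof.
  assert (H := @is_RInt_const R_NormedModule a b 0).
  unfold scal in H; simpl in H; unfold mult in H; simpl in H.
  now rewrite Rmult_0_r in H.
Qed.

Lemma is_RInt_gen_of_support (h : R -> R) (a b I : R) :
  (forall x, x < a -> h x = 0) -> (forall x, b < x -> h x = 0) ->
  is_RInt h a b I ->
  is_RInt_gen h (Rbar_locally m_infty) (Rbar_locally p_infty) I.
Proof.
  intros Hleft Hright Hab P HP.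
  apply Filter_prod with (fun x => x < a) (fun y => b < y).
  - exists a; auto.
  - exists b; auto.
  - intros x y Hx Hy; simpl.
    exists I; split; [| now apply locally_singleton].
    replace I with (plus 0 (plus I 0)) by (unfold plus; simpl; ring).
    apply (@is_RInt_Chasles R_NormedModule) with a;
      [| apply (@is_RInt_Chasles R_NormedModule) with b; [exact Hab |]].
    + apply (@is_RInt_ext R_NormedModule) with (fun _ => 0); [| apply is_RInt_const0].
      intros z [_ Hz]; rewrite Rmax_right in Hz by lra; symmetry; apply Hleft; lra.
    + apply (@is_RInt_ext R_NormedModule) with (fun _ => 0); [| apply is_RInt_const0].
      intros z [Hz _]; rewrite Rmin_left in Hz by lra; symmetry; apply Hright; lra.
Qed.

Lemma haar_out (x : R) : x < 0 \/ 1 <= x -> haar x = 0.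
Proof.
  intros Hx; unfold haar.
  destruct (Rle_dec 0 x), (Rlt_dec x (1/2)), (Rlt_dec x 1); auto; lra.
Qed.

Lemma haar_first_half (x : R) : 0 <= x < 1/2 -> haar x = 1.
Proof.
  intros Hx; unfold haar.
  destruct (Rle_dec 0 x), (Rlt_dec x (1/2)); auto; lra.
Qed.

Lemma haar_second_half (x : R) : 1/2 <= x < 1 -> haar x = -1.
Proof.
  intros Hx; unfold haar.
  destruct (Rle_dec 0 x), (Rlt_dec x (1/2)), (Rlt_dec x 1); auto; lra.
Qed.

Lemma scaled_shift_bounds (u s t lo hi : R) :
  0 < s -> u + lo * s <= t < u + hi * s -> lo <= (t - u) / s < hi.
Proof.
  intros Hs Ht.
  assert (Hx : t - u = (t - u) / s * s) by (field; lra).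
  split; nra.
Qed.

Lemma daughter_haar_out (u s t : R) :
  0 < s -> t < u \/ u + s < t -> daughter haar u s t = 0.
Proof.
  intros Hs Ht; unfold daughter.
  assert (Hx : t - u = (t - u) / s * s) by (field; lra).
  rewrite haar_out; [ring | nra].
Qed.

Lemma daughter_haar_first_half (u s t : R) :
  0 < s -> u < t < u + s / 2 -> daughter haar u s t = / sqrt s.
Proof.
  intros Hs Ht; unfold daughter.
  rewrite haar_first_half; [ring | apply scaled_shift_bounds; lra].
Qed.

Lemma daughter_haar_second_half (u s t : R) :
  0 < s -> u + s / 2 < t < u + s -> daughter haar u s t = - / sqrt s.
Proof.
  intros Hs Ht; unfold daughter.
  rewrite haar_second_half; [ring | apply scaled_shift_bounds; lra].
Qed.

Lemma CWT_haar (f : R -> R) (u s : R) :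
  0 < s -> (forall a b, ex_RInt f a b) ->
  CWT_is haar f u s
    ((RInt f u (u + s / 2) - RInt f (u + s / 2) (u + s)) / sqrt s).
Proof.
  intros Hs Hint.
  set (c := / sqrt s).
  apply is_RInt_gen_of_support with u (u + s).
  - intros t Ht; rewrite daughter_haar_out by lra; ring.
  - intros t Ht; rewrite daughter_haar_out by lra; ring.
  - replace ((RInt f u (u + s / 2) - RInt f (u + s / 2) (u + s)) / sqrt s)
      with (plus (scal c (RInt f u (u + s / 2)))
                 (scal (- c) (RInt f (u + s / 2) (u + s))))
      by (unfold plus, scal, c; simpl; unfold mult; simpl; field;
          apply Rgt_not_eq, sqrt_lt_R0; lra).
    apply (@is_RInt_Chasles R_NormedModule) with (u + s / 2).
    + apply (@is_RInt_ext R_NormedModule) with (fun t => scal c (f t)).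
      * intros t [Ht1 Ht2]; rewrite Rmin_left in Ht1 by lra; rewrite Rmax_right in Ht2 by lra.
        rewrite daughter_haar_first_half by lra.
        unfold scal; simpl; unfold mult; simpl; unfold c; ring.
      * apply (@is_RInt_scal R_NormedModule), (@RInt_correct R_CompleteNormedModule), Hint.
    + apply (@is_RInt_ext R_NormedModule) with (fun t => scal (- c) (f t)).
      * intros t [Ht1 Ht2]; rewrite Rmin_left in Ht1 by lra; rewrite Rmax_right in Ht2 by lra.
        rewrite daughter_haar_second_half by lra.
        unfold scal; simpl; unfold mult; simpl; unfold c; ring.
      * apply (@is_RInt_scal R_NormedModule), (@RInt_correct R_CompleteNormedModule), Hint.
Qed.

Lemma window_shift_of_CWT_haar_zero (f : R -> R) (u T : R) :
  0 < T -> (forall a b, ex_RInt f a b) ->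
  CWT_is haar f u (2 * T) 0 ->
  RInt f (u + T) (u + T + T) = RInt f u (u + T).
Proof.
  intros HT Hint HW.
  assert (H2T : 0 < 2 * T) by lra.
  assert (Hval := is_RInt_gen_unique _ _ (CWT_haar f u (2 * T) H2T Hint)).
  rewrite (is_RInt_gen_unique _ _ HW) in Hval.
  replace (2 * T / 2) with T in Hval by field.
  replace (u + 2 * T) with (u + T + T) in Hval by ring.
  assert (Hsqrt : sqrt (2 * T) <> 0) by (apply Rgt_not_eq, sqrt_lt_R0; exact H2T).
  unfold Rdiv in Hval; symmetry in Hval.
  apply Rmult_integral in Hval as [Hdiff | Hinv]; [lra |].
  now apply Rinv_neq_0_compat in Hsqrt.
Qed.

Lemma is_derive_RInt_window (f : R -> R) (h u : R) :
  (forall x, continuous f x) ->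
  is_derive (fun v => RInt f v (v + h)) u (f (u + h) - f u).
Proof.
  intros Hc.
  assert (Hint : forall a b, ex_RInt f a b)
    by (intros a b; apply (@ex_RInt_continuous R_CompleteNormedModule); auto).
  set (P := fun x => RInt f 0 x).
  assert (HP : forall x, is_derive P x (f x)).
  { intros x; apply (@is_derive_RInt R_NormedModule) with 0; [| apply Hc].
    apply filter_forall; intros y; apply (@RInt_correct R_CompleteNormedModule), Hint. }
  apply is_derive_ext with (fun v => P (v + h) - P v).
  - intros v; unfold P.
    rewrite <- (RInt_Chasles f 0 v (v + h)) by apply Hint.
    unfold plus; simpl; ring.
  - auto_derive.
    + split; [exists (f (u + h)); apply HP | split; [exists (f u); apply HP | exact I]].
    + rewrite !(is_derive_unique _ _ _ (HP _)); ring.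
Qed.

(* Both sides are the derivative at u of the window integral v |-> int_v^(v+T) f, computed
   directly and through its shift by T. *)
Lemma increment_periodic_of_window_periodic (f : R -> R) (T : R) :
  (forall x, continuous f x) ->
  (forall u, RInt f (u + T) (u + T + T) = RInt f u (u + T)) ->
  forall u, f (u + T + T) - f (u + T) = f (u + T) - f u.
Proof.
  intros Hc Hwin u.
  set (window := fun v => RInt f v (v + T)).
  assert (Hshifted : is_derive window u (f (u + T + T) - f (u + T))).
  { apply is_derive_ext with (fun v => window (v + T)); [apply Hwin |].
    replace (f (u + T + T) - f (u + T)) with (scal 1 (f (u + T + T) - f (u + T)))
      by (unfold scal; simpl; unfold mult; simpl; ring).
    apply (is_derive_comp window (fun v => v + T)); [apply is_derive_RInt_window, Hc |].
    auto_derive; auto; ring. }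
  rewrite <- (is_derive_unique _ _ _ Hshifted).
  apply is_derive_unique, is_derive_RInt_window, Hc.
Qed.

Lemma periodic_INR (g : R -> R) (T : R) :
  (forall u, g (u + T) = g u) -> forall (n : nat) u, g (u + INR n * T) = g u.
Proof.
  intros Hg n; induction n as [| n IH]; intros u.
  - simpl; f_equal; ring.
  - rewrite S_INR.
    replace (u + (INR n + 1) * T) with (u + INR n * T + T) by ring.
    rewrite Hg; apply IH.
Qed.

Lemma shift_INR_of_periodic_increment (f : R -> R) (T : R) :
  (forall u, f (u + T + T) - f (u + T) = f (u + T) - f u) ->
  forall (n : nat) t, f (t + INR n * T) = f t + INR n * (f (t + T) - f t).
Proof.
  intros Hinc n t.
  assert (Hg := periodic_INR (fun u => f (u + T) - f u) T Hinc); simpl in Hg.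
  induction n as [| n IH].
  - simpl; replace (t + 0 * T) with t by ring; ring.
  - rewrite S_INR.
    replace (t + (INR n + 1) * T) with (t + INR n * T + T) by ring.
    specialize (Hg n t); lra.
Qed.

Lemma eq0_of_bounded_multiples (a d M : R) :
  (forall n : nat, Rabs (a + INR n * d) <= M) -> d = 0.
Proof.
  intros Hbound.
  destruct (Req_dec d 0) as [| Hd]; [assumption | exfalso].
  destruct (INR_archimed (Rabs d) (2 * M)) as [n Hn]; [now apply Rabs_pos_lt |].
  assert (Ha := Hbound 0%nat); simpl in Ha; rewrite Rmult_0_l, Rplus_0_r in Ha.
  assert (Hn_le : Rabs (INR n * d) <= 2 * M).
  { replace (INR n * d) with ((a + INR n * d) + - a) by ring.
    eapply Rle_trans; [apply Rabs_triang |].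
    rewrite Rabs_Ropp; specialize (Hbound n); lra. }
  rewrite Rabs_mult, (Rabs_right (INR n)) in Hn_le by apply Rle_ge, pos_INR.
  lra.
Qed.

Theorem proposition2p1 (f : R -> R) (T : R) :
  (forall x, continuous f x) ->
  (exists M, forall x, Rabs (f x) <= M) ->
  0 < T ->
  (forall u, CWT_is haar f u (2 * T) 0) ->
  forall t, f (t + T) = f t.
Proof.
  intros Hc [M HM] HT HW t.
  assert (Hint : forall a b, ex_RInt f a b)
    by (intros a b; apply (@ex_RInt_continuous R_CompleteNormedModule); auto).
  assert (Hwin : forall u, RInt f (u + T) (u + T + T) = RInt f u (u + T))
    by (intros u; apply window_shift_of_CWT_haar_zero; auto).
  assert (Hshift := shift_INR_of_periodic_increment f T
                      (increment_periodic_of_window_periodic f T Hc Hwin)).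
  enough (f (t + T) - f t = 0) by lra.
  apply (eq0_of_bounded_multiples (f t) _ M).
  intros n; rewrite <- Hshift; apply HM.
Qed.
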